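(* Let $H$ be a finite-dimensional semisimple Hopf algebra over an algebraically closed field $k$ of characteristic $0$. The following are equivalent: (i) there exists a $1$-dimensional representation of $H$ whose character is faithful; (ii) $R(H)=k\langle\sigma\rangle$, the span of the powers of some grouplike element $\sigma$ of $H^*$; (iii) $H\cong(k\langle\sigma\rangle)^*$, i.e. $H^*$ is the group algebra of the cyclic group generated by some grouplike element $\sigma$ of $H^*$.
   Context: A character $\chi_V$ of a finite-dimensional left $H$-module $V$ is faithful if $\mathrm{LKer}_V=k1$, where $\mathrm{LKer}_V=\{h\in H\mid\sum h_1\otimes h_2\cdot v=h\otimes v\ \forall v\in V\}$. $R(H)\subset H^*$ is the span of the irreducible characters of $H$. *)

(* Finite-dimensional Hopf algebras are given in coordinates:
   H has a fixed basis e_0, ..., e_(n-1); an element of H is the row vector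
   of its coordinates ('rV[k]_n), and an element f of the dual H^* is the
   row vector (f(e_0), ..., f(e_(n-1))). *)
From mathcomp Require Import all_boot all_algebra.
Set Implicit Arguments. Unset Strict Implicit. Unset Printing Implicit Defensive.
Import GRing.Theory.
Local Open Scope ring_scope.

Record hopf_str (k : fieldType) (n : nat) := HopfStr {
  hmul : 'I_n -> 'I_n -> 'I_n -> k;  (* e_i e_j = \sum_t hmul i j t e_t *)
  hone : 'I_n -> k;                  (* 1 = \sum_i hone i e_i *)
  hcop : 'I_n -> 'I_n -> 'I_n -> k;  (* Delta e_i = \sum_(a,b) hcop i a b e_a (x) e_b *)
  hcou : 'I_n -> k;
  hant : 'I_n -> 'I_n -> k           (* S e_i = \sum_j hant i j e_j *)
}.

Record is_hopf (k : fieldType) (n : nat) (A : hopf_str k n) : Prop := {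
  hmulA : forall i j l t,
    \sum_p hmul A i j p * hmul A p l t = \sum_p hmul A j l p * hmul A i p t;
  hmul1x : forall j t, \sum_i hone A i * hmul A i j t = (j == t)%:R;
  hmulx1 : forall i t, \sum_j hone A j * hmul A i j t = (i == t)%:R;
  hcopA : forall i a b c,
    \sum_j hcop A i j c * hcop A j a b = \sum_j hcop A i a j * hcop A j b c;
  hcou_l : forall i l, \sum_j hcou A j * hcop A i j l = (i == l)%:R;
  hcou_r : forall i j, \sum_l hcop A i j l * hcou A l = (i == j)%:R;
  hcop_mul : forall i j a b,
    \sum_l hmul A i j l * hcop A l a b =
    \sum_p \sum_q \sum_r \sum_s
       hcop A i p q * hcop A j r s * hmul A p r a * hmul A q s b;
  hcop_one : forall a b, \sum_l hone A l * hcop A l a b = hone A a * hone A b;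
  hcou_mul : forall i j, \sum_l hmul A i j l * hcou A l = hcou A i * hcou A j;
  hcou_one : \sum_l hone A l * hcou A l = 1;
  hant_l : forall i t,
    \sum_p \sum_q hcop A i p q * (\sum_r hant A p r * hmul A r q t)
    = hcou A i * hone A t;                       (* S(h1) h2 = eps(h) 1 *)
  hant_r : forall i t,
    \sum_p \sum_q hcop A i p q * (\sum_r hant A q r * hmul A p r t)
    = hcou A i * hone A t                        (* h1 S(h2) = eps(h) 1 *)
}.

Definition hmulv (k : fieldType) (n : nat) (A : hopf_str k n) (x y : 'rV[k]_n)
  : 'rV[k]_n := \row_t \sum_i \sum_j x 0 i * y 0 j * hmul A i j t.
Definition honev (k : fieldType) (n : nat) (A : hopf_str k n) : 'rV[k]_n :=
  \row_i hone A i.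

(* H is semisimple: every left ideal of H (a subspace, given as a row space,
   stable under left multiplication) has a complementary left ideal. *)
Definition left_ideal (k : fieldType) (n : nat) (A : hopf_str k n) (I : 'M[k]_n)
  : Prop := forall x v : 'rV[k]_n, (v <= I)%MS -> (hmulv A x v <= I)%MS.
Definition semisimple (k : fieldType) (n : nat) (A : hopf_str k n) : Prop :=
  forall I : 'M[k]_n, left_ideal A I ->
    exists J : 'M[k]_n, [/\ left_ideal A J, (I :&: J <= (0 : 'M[k]_n))%MS
                         & (1%:M <= I + J)%MS].

(* A d-dimensional left H-module: V = column vectors 'cV_d, e_i acts by the
   matrix r i; h acts by \sum_i h_i *: r i.  Algebra map conditions: *)
Definition rep_of (k : fieldType) (n d : nat) (A : hopf_str k n)
  (r : 'I_n -> 'M[k]_d) : Prop :=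
  (forall i j, r i *m r j = \sum_l hmul A i j l *: r l) /\
  \sum_l hone A l *: r l = 1%:M.

Definition charv (k : fieldType) (n d : nat) (r : 'I_n -> 'M[k]_d) : 'rV[k]_n :=
  \row_i \tr (r i).

(* Irreducible module: nonzero, and every submodule (a subspace of 'cV_d,
   encoded as the row space of U whose rows are the transposed vectors) is 0
   or everything. *)
Definition irr_rep (k : fieldType) (n d : nat) (A : hopf_str k n)
  (r : 'I_n -> 'M[k]_d) : Prop :=
  [/\ rep_of A r, (0 < d)%N &
     forall U : 'M[k]_d, (forall i, (U *m (r i)^T <= U)%MS) ->
       U = 0 \/ row_full U].

Definition inRH (k : fieldType) (n : nat) (A : hopf_str k n) (f : 'rV[k]_n)
  : Prop :=
  exists (m : nat) (c : 'I_m -> k) (d : 'I_m -> nat)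
         (r : forall j : 'I_m, 'I_n -> 'M[k]_(d j)),
    (forall j, irr_rep A (r j)) /\ f = \sum_j c j *: charv (r j).

(* Algebra structure of H^*: convolution (f g)(h) = \sum f(h1) g(h2),
   unit eps. *)
Definition dmul (k : fieldType) (n : nat) (A : hopf_str k n) (f g : 'rV[k]_n)
  : 'rV[k]_n := \row_i \sum_a \sum_b hcop A i a b * f 0 a * g 0 b.
Definition deps (k : fieldType) (n : nat) (A : hopf_str k n) : 'rV[k]_n :=
  \row_i hcou A i.
Definition dpow (k : fieldType) (n : nat) (A : hopf_str k n) (s : 'rV[k]_n)
  (m : nat) : 'rV[k]_n := iter m (fun g => dmul A g s) (deps A).

(* Grouplike element of H^*: Delta_{H^*}(s) = s (x) s and eps_{H^*}(s) = 1,
   where Delta_{H^*}(s)(x (x) y) = s(xy) and eps_{H^*}(s) = s(1). *)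
Definition grouplike_dual (k : fieldType) (n : nat) (A : hopf_str k n)
  (s : 'rV[k]_n) : Prop :=
  (forall i j, \sum_l hmul A i j l * s 0 l = s 0 i * s 0 j) /\
  \sum_l hone A l * s 0 l = 1.

Definition in_span_pow (k : fieldType) (n : nat) (A : hopf_str k n)
  (s f : 'rV[k]_n) : Prop :=
  exists (m : nat) (c : 'I_m -> k), f = \sum_(j < m) c j *: dpow A s j.

(* LKer_V = { h | \sum h1 (x) h2.v = h (x) v for all v in V };
   H (x) V is identified with 'M_(n,d) (coefficient of e_j (x) (a-th basis vector)). *)
Definition in_LKer (k : fieldType) (n d : nat) (A : hopf_str k n)
  (r : 'I_n -> 'M[k]_d) (h : 'rV[k]_n) : Prop :=
  forall (v : 'cV[k]_d) (j : 'I_n) (a : 'I_d),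
    \sum_i h 0 i * (\sum_l hcop A i j l * (r l *m v) a 0) = h 0 j * v a 0.

(* The character of V is faithful: LKer_V = k 1. *)
Definition faithful_char (k : fieldType) (n d : nat) (A : hopf_str k n)
  (r : 'I_n -> 'M[k]_d) : Prop :=
  forall h : 'rV[k]_n, in_LKer A r h <-> exists c : k, h = c *: honev A.

(* A grouplike [s] of [H^*] is an algebra map [H -> k], and its convolution
   powers [s^j] are the characters of one-dimensional representations.
   Everything turns on the two-sided ideal [I] of elements killed by every
   [s^j]: the powers span [H^*] exactly when [I = 0].
   (iii) -> (i): an [h] in the left kernel of [s] is fixed by
   [h |-> h_(1) s(h_(2))], hence [s^j(h) = eps(h)] for all [j]; as the [s^j]
   span [H^*], [h] is a multiple of [1].  (iii) -> (ii) holds since each [s^j]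
   is an irreducible character.
   (i) -> (iii): [h |-> h_(1) s(h_(2))] is an algebra automorphism of [H]
   stabilising [I], so it fixes the right unit [e] of [I], which is unique by
   semisimplicity.  Thus [e] lies in the left kernel, so [e] is a multiple of
   [1], and [eps(e) = 0] gives [e = 0], i.e. [I = 0].
   (ii) -> (iii): if [I <> 0] it contains a minimal left ideal [L]; the
   character of [L] is nonzero on the idempotent right unit of [L] (its trace
   is [dim L] in characteristic 0), yet it lies in [R(H) = k<s>], which
   vanishes on [I]. *)

From mathcomp Require Import all_boot all_algebra.
From mathcomp Require Import ring.
From Stdlib Require Import Classical_Prop.
Set Implicit Arguments.
Unset Strict Implicit.
Unset Printing Implicit Defensive.
Import GRing.Theory.
Local Open Scope ring_scope.

Section HopfAlgebra.
Variables (k : fieldType) (n : nat) (A : hopf_str k n).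
Hypothesis HA : is_hopf A.

Definition lmul_mx (x : 'rV[k]_n) : 'M[k]_n :=
  \matrix_(j, t) \sum_i x 0 i * hmul A i j t.
Definition rmul_mx (v : 'rV[k]_n) : 'M[k]_n :=
  \matrix_(i, t) \sum_j v 0 j * hmul A i j t.

Lemma hmulvEl x v : hmulv A x v = v *m lmul_mx x.
Proof.
apply/rowP => t; rewrite !mxE exchange_big; apply: eq_bigr => j _.
by rewrite mxE big_distrr; apply: eq_bigr => i _ /=; rewrite mulrCA mulrA.
Qed.

Lemma hmulvEr x v : hmulv A x v = x *m rmul_mx v.
Proof.
apply/rowP => t; rewrite !mxE; apply: eq_bigr => i _.
by rewrite mxE big_distrr; apply: eq_bigr => j _ /=; rewrite mulrA.
Qed.

Lemma lmul_mxM x y : lmul_mx (hmulv A x y) = lmul_mx y *m lmul_mx x.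
Proof.
apply/matrixP => j t; rewrite !mxE.
transitivity
  (\sum_i \sum_j' x 0 i * y 0 j' * \sum_p hmul A i j' p * hmul A p j t).
  rewrite (eq_bigr (fun p =>
    \sum_i \sum_j' x 0 i * y 0 j' * (hmul A i j' p * hmul A p j t))).
    rewrite exchange_big; apply: eq_bigr => i _; rewrite exchange_big.
    by apply: eq_bigr => j' _; rewrite big_distrr.
  move=> p _; rewrite mxE big_distrl; apply: eq_bigr => i _.
  by rewrite big_distrl; apply: eq_bigr => j' _ /=; rewrite mulrA.
symmetry.
transitivity
  (\sum_q \sum_i \sum_j' x 0 i * y 0 j' * (hmul A j' j q * hmul A i q t)).
  apply: eq_bigr => q _; rewrite !mxE big_distrlr exchange_big /=.
  by apply: eq_bigr => i _; apply: eq_bigr => j' _; ring.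
rewrite exchange_big; apply: eq_bigr => i _; rewrite exchange_big.
by apply: eq_bigr => j' _; rewrite -big_distrr (hmulA HA).
Qed.

Lemma hmulvA x y z : hmulv A (hmulv A x y) z = hmulv A x (hmulv A y z).
Proof.
by rewrite [LHS]hmulvEl lmul_mxM [hmulv A y z]hmulvEl hmulvEl mulmxA.
Qed.

Lemma lmul_mx1 : lmul_mx (honev A) = 1%:M.
Proof.
apply/matrixP => j t; rewrite !mxE -(hmul1x HA j t).
by apply: eq_bigr => i _; rewrite mxE.
Qed.

Lemma hmul1v v : hmulv A (honev A) v = v.
Proof. by rewrite hmulvEl lmul_mx1 mulmx1. Qed.

Lemma hmulv1 v : hmulv A v (honev A) = v.
Proof.
rewrite hmulvEr -[RHS]mulmx1; congr (_ *m _); apply/matrixP => i t.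
by rewrite !mxE -(hmulx1 HA i t); apply: eq_bigr => j _; rewrite mxE.
Qed.

Lemma hmulvDr x u v : hmulv A x (u + v) = hmulv A x u + hmulv A x v.
Proof. by rewrite !hmulvEl mulmxDl. Qed.

Lemma hmulvBr x u v : hmulv A x (u - v) = hmulv A x u - hmulv A x v.
Proof. by rewrite !hmulvEl mulmxBl. Qed.

Lemma hmulv0 x : hmulv A x 0 = 0.
Proof. by rewrite hmulvEl mul0mx. Qed.

Lemma sum_delta_mx (f : 'I_n -> k) i :
  \sum_i' (delta_mx 0 i : 'rV[k]_n) 0 i' * f i' = f i.
Proof.
rewrite (bigD1 i) //= big1 ?addr0 => [|i' ne]; first by rewrite mxE !eqxx mul1r.
by rewrite mxE eqxx (negbTE ne) mul0r.
Qed.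

Lemma lmul_mx_expand x : lmul_mx x = \sum_i x 0 i *: lmul_mx (delta_mx 0 i).
Proof.
apply/matrixP => j t; rewrite summxE !mxE; apply: eq_bigr => i _.
by rewrite !mxE sum_delta_mx.
Qed.

Lemma hmulv_delta i j :
  hmulv A (delta_mx 0 i) (delta_mx 0 j) = \row_t hmul A i j t.
Proof.
rewrite hmulvEr -rowE; apply/rowP => t; rewrite !mxE.
exact: (sum_delta_mx (fun j' => hmul A i j' t)).
Qed.

Definition evalv (f v : 'rV[k]_n) : k := \sum_i v 0 i * f 0 i.

Lemma evalv_mx f v : (v *m f^T) 0 0 = evalv f v.
Proof. by rewrite mxE; apply: eq_bigr => i _; rewrite mxE. Qed.

Lemma evalv_delta f i : evalv f (delta_mx 0 i) = f 0 i.
Proof. exact: sum_delta_mx. Qed.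

Lemma evalvC f v : evalv f v = evalv v f.
Proof. by apply: eq_bigr => i _; rewrite mulrC. Qed.

Lemma evalvZ f c v : evalv f (c *: v) = c * evalv f v.
Proof.
by rewrite /evalv big_distrr; apply: eq_bigr => i _; rewrite mxE /=; ring.
Qed.

Lemma evalv_sumZ m (c : 'I_m -> k) (g : 'I_m -> 'rV[k]_n) v :
  evalv (\sum_j c j *: g j) v = \sum_j c j * evalv (g j) v.
Proof.
rewrite /evalv; under eq_bigr => i _ do rewrite summxE big_distrr.
rewrite exchange_big; apply: eq_bigr => j _ /=.
by rewrite big_distrr; apply: eq_bigr => i _ /=; rewrite mxE; ring.
Qed.

Lemma evalv_deps1 : evalv (deps A) (honev A) = 1.
Proof. by rewrite -(hcou_one HA); apply: eq_bigr => i _; rewrite !mxE. Qed.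

(* [v *m hit_mx s] is [v_(1) s(v_(2))]. *)
Definition hit_mx (s : 'rV[k]_n) : 'M[k]_n :=
  \matrix_(i, a) \sum_b hcop A i a b * s 0 b.

Lemma dmulE f s : dmul A f s = f *m (hit_mx s)^T.
Proof.
apply/rowP => i; rewrite !mxE; apply: eq_bigr => a _; rewrite !mxE big_distrr.
by apply: eq_bigr => b _ /=; ring.
Qed.

Lemma evalv_dmul f s v : evalv (dmul A f s) v = evalv f (v *m hit_mx s).
Proof. by rewrite dmulE -!evalv_mx trmx_mul trmxK mulmxA. Qed.

Lemma hit_mxM f g : hit_mx g *m hit_mx f = hit_mx (dmul A f g).
Proof.
apply/matrixP => i j; rewrite !mxE.
transitivity (\sum_b \sum_c g 0 b * f 0 c * \sum_p hcop A i p b * hcop A p j c).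
  under eq_bigr => p _ do rewrite !mxE big_distrlr /=.
  rewrite exchange_big; apply: eq_bigr => b _; rewrite exchange_big.
  by apply: eq_bigr => c _; rewrite big_distrr; apply: eq_bigr => p _ /=; ring.
under eq_bigr => b _ do under eq_bigr => c _ do rewrite (hcopA HA) big_distrr.
rewrite exchange_big; under eq_bigr => c _ do rewrite exchange_big.
rewrite exchange_big; apply: eq_bigr => q _; rewrite mxE big_distrr.
apply: eq_bigr => c _; rewrite big_distrr; apply: eq_bigr => b _ /=; ring.
Qed.

Lemma hit_mx_deps : hit_mx (deps A) = 1%:M.
Proof.
apply/matrixP => i a; rewrite !mxE -(hcou_r HA i a).
by apply: eq_bigr => b _; rewrite mxE.
Qed.

End HopfAlgebra.

Section Grouplike.
Variables (k : fieldType) (n : nat) (A : hopf_str k n).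
Hypothesis HA : is_hopf A.

Lemma grouplike_dualP s :
  grouplike_dual A s <->
  {morph evalv s : x y / hmulv A x y >-> x * y} /\ evalv s (honev A) = 1.
Proof.
split=> [[Hs1 Hs2]|[HM H1]].
  split=> [x y|]; last by rewrite -Hs2; apply: eq_bigr => i _; rewrite mxE.
  rewrite /evalv big_distrlr /=.
  rewrite (eq_bigr (fun t =>
    \sum_i \sum_j x 0 i * y 0 j * (hmul A i j t * s 0 t))); last first.
    move=> t _; rewrite mxE big_distrl; apply: eq_bigr => i _.
    by rewrite big_distrl; apply: eq_bigr => j _ /=; ring.
  rewrite exchange_big; apply: eq_bigr => i _; rewrite exchange_big.
  by apply: eq_bigr => j _; rewrite -big_distrr Hs1 /=; ring.
split=> [i j|]; last by rewrite -H1; apply: eq_bigr => l _; rewrite mxE.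
have := HM (delta_mx 0 i) (delta_mx 0 j).
rewrite hmulv_delta !evalv_delta => <-.
by apply: eq_bigr => l _; rewrite mxE.
Qed.

Section OneGrouplike.
Variable s : 'rV[k]_n.
Hypothesis Hs : grouplike_dual A s.

Lemma hit_mx_hmul i j a : \sum_l hmul A i j l * hit_mx A s l a =
  \sum_p \sum_r hit_mx A s i p * hit_mx A s j r * hmul A p r a.
Proof.
case: Hs => Hs1 _.
transitivity (\sum_b s 0 b * \sum_l hmul A i j l * hcop A l a b).
  rewrite (eq_bigr (fun l => \sum_b s 0 b * (hmul A i j l * hcop A l a b))).
    by rewrite exchange_big; apply: eq_bigr => b _; rewrite big_distrr.
  by move=> l _; rewrite mxE big_distrr; apply: eq_bigr => b _ /=; ring.
under eq_bigr => b _ do rewrite (hcop_mul HA).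
transitivity (\sum_p \sum_q \sum_r \sum_s' hcop A i p q * hcop A j r s' *
                hmul A p r a * (s 0 q * s 0 s')).
  rewrite (eq_bigr (fun b => \sum_p \sum_q \sum_r \sum_s' s 0 b *
    (hcop A i p q * hcop A j r s' * hmul A p r a * hmul A q s' b))); last first.
    move=> b _; rewrite big_distrr; apply: eq_bigr => p _.
    rewrite big_distrr; apply: eq_bigr => q _.
    rewrite big_distrr; apply: eq_bigr => r _.
    by rewrite big_distrr; apply: eq_bigr => s' _.
  rewrite exchange_big; apply: eq_bigr => p _.
  rewrite exchange_big; apply: eq_bigr => q _.
  rewrite exchange_big; apply: eq_bigr => r _.
  rewrite exchange_big; apply: eq_bigr => s' _.
  by rewrite -Hs1 big_distrr; apply: eq_bigr => b _ /=; ring.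
apply: eq_bigr => p _; rewrite exchange_big; apply: eq_bigr => r _.
rewrite !mxE big_distrl big_distrl; apply: eq_bigr => q _ /=.
by rewrite big_distrr big_distrl; apply: eq_bigr => s' _ /=; ring.
Qed.

Lemma hit_mx_hmulv x y :
  hmulv A (x *m hit_mx A s) (y *m hit_mx A s) = hmulv A x y *m hit_mx A s.
Proof.
apply/rowP => a; rewrite [LHS]mxE [RHS]mxE.
transitivity
  (\sum_i \sum_j x 0 i * y 0 j * \sum_l hmul A i j l * hit_mx A s l a);
  last first.
  rewrite [RHS](eq_bigr (fun l => \sum_i \sum_j x 0 i * y 0 j *
                  (hmul A i j l * hit_mx A s l a))); last first.
    move=> l _; rewrite mxE big_distrl; apply: eq_bigr => i _.
    by rewrite big_distrl; apply: eq_bigr => j _ /=; ring.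
  symmetry; rewrite exchange_big; apply: eq_bigr => i _; rewrite exchange_big.
  by apply: eq_bigr => j _; rewrite big_distrr.
under [RHS]eq_bigr => i _ do
  under eq_bigr => j _ do rewrite hit_mx_hmul big_distrr.
under [RHS]eq_bigr => i _ do under eq_bigr => j _ do
  under eq_bigr => p _ do rewrite big_distrr.
rewrite (eq_bigr (fun p => \sum_r \sum_i \sum_j x 0 i * y 0 j *
  (hit_mx A s i p * hit_mx A s j r * hmul A p r a))); last first.
  move=> p _; apply: eq_bigr => r _; rewrite !mxE big_distrlr /= big_distrl.
  by apply: eq_bigr => i _; rewrite big_distrl; apply: eq_bigr => j _ /=; ring.
under eq_bigr => p _ do rewrite exchange_big.
rewrite exchange_big; apply: eq_bigr => i _.
under eq_bigr => p _ do rewrite exchange_big.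
by rewrite exchange_big.
Qed.

Lemma honev_hit_mx : honev A *m hit_mx A s = honev A.
Proof.
case: Hs => _ Hs2; apply/rowP => a; rewrite !mxE.
transitivity (\sum_b (\sum_l hone A l * hcop A l a b) * s 0 b).
  rewrite (eq_bigr (fun l => \sum_b hone A l * hcop A l a b * s 0 b)).
    by rewrite exchange_big; apply: eq_bigr => b _; rewrite big_distrl.
  move=> l _; rewrite !mxE big_distrr.
  by apply: eq_bigr => b _ /=; rewrite mulrA.
under eq_bigr => b _ do rewrite (hcop_one HA).
by rewrite -[RHS]mulr1 -Hs2 big_distrr; apply: eq_bigr => b _ /=; rewrite mulrA.
Qed.

Definition dual_anti : 'rV[k]_n := \row_l \sum_r hant A l r * s 0 r.

Lemma dmul_anti : dmul A dual_anti s = deps A.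
Proof.
case: Hs => Hs1 Hs2; apply/rowP => p; rewrite !mxE.
transitivity (\sum_t (\sum_q \sum_l hcop A p q l *
    (\sum_r hant A q r * hmul A r l t)) * s 0 t); last first.
  under eq_bigr => t _ do rewrite (hant_l HA) -mulrA.
  by rewrite -big_distrr /= Hs2 mulr1.
transitivity (\sum_q \sum_l \sum_r \sum_t
    hcop A p q l * hant A q r * (hmul A r l t * s 0 t)).
  apply: eq_bigr => q _; apply: eq_bigr => l _.
  rewrite mxE big_distrr big_distrl; apply: eq_bigr => r _ /=.
  rewrite (_ : hcop A p q l * (hant A q r * s 0 r) * s 0 l =
               hcop A p q l * hant A q r * (s 0 r * s 0 l)); last by ring.
  by rewrite -Hs1 big_distrr; apply: eq_bigr => t _ /=; ring.
symmetry.
under eq_bigr => t _ do rewrite big_distrl.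
rewrite exchange_big; apply: eq_bigr => q _.
under eq_bigr => t _ do rewrite big_distrl.
rewrite exchange_big; apply: eq_bigr => l _.
under eq_bigr => t _ do rewrite big_distrr big_distrl.
rewrite exchange_big; apply: eq_bigr => r _.
by apply: eq_bigr => t _ /=; ring.
Qed.

Lemma hit_mx_unit : hit_mx A s \in unitmx.
Proof.
have inv : hit_mx A s *m hit_mx A dual_anti = 1%:M.
  by rewrite (hit_mxM HA) dmul_anti (hit_mx_deps HA).
by case: (mulmx1_unit inv).
Qed.

End OneGrouplike.

Lemma grouplike_dmul g s : grouplike_dual A g -> grouplike_dual A s ->
  grouplike_dual A (dmul A g s).
Proof.
move=> /grouplike_dualP[gM g1] Hs; apply/grouplike_dualP.
split=> [x y|]; last by rewrite evalv_dmul honev_hit_mx.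
by rewrite !evalv_dmul -gM hit_mx_hmulv.
Qed.

Lemma grouplike_deps : grouplike_dual A (deps A).
Proof.
split; last by rewrite -(hcou_one HA); apply: eq_bigr => l _; rewrite mxE.
by move=> i j; rewrite !mxE -(hcou_mul HA); apply: eq_bigr => l _; rewrite mxE.
Qed.

Lemma grouplike_dpow s j : grouplike_dual A s -> grouplike_dual A (dpow A s j).
Proof.
move=> Hs; elim: j => [|j IH]; first exact: grouplike_deps.
exact: grouplike_dmul.
Qed.

End Grouplike.

Definition right_ideal (k : fieldType) (n : nat) (A : hopf_str k n)
  (I : 'M[k]_n) : Prop :=
  forall x v : 'rV[k]_n, (v <= I)%MS -> (hmulv A v x <= I)%MS.

Definition right_unit (k : fieldType) (n : nat) (A : hopf_str k n)
  (I : 'M[k]_n) (e : 'rV[k]_n) : Prop :=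
  (e <= I)%MS /\ forall x, (x <= I)%MS -> hmulv A x e = x.

Definition minimal_left_ideal (k : fieldType) (n : nat) (A : hopf_str k n)
  (L : 'M[k]_n) : Prop :=
  [/\ left_ideal A L, (0 < \rank L)%N &
      forall U : 'M[k]_n, left_ideal A U -> (U <= L)%MS ->
        \rank U = 0%N \/ \rank U = \rank L].

Section PowerAnnihilator.
Variables (k : fieldType) (n : nat) (A : hopf_str k n).
Hypothesis HA : is_hopf A.
Variable s : 'rV[k]_n.
Hypothesis Hs : grouplike_dual A s.

Definition pow_mx m : 'M[k]_(m, n) := \matrix_(j < m) dpow A s j.

Fact pow_mx_rank_small : exists d, (\rank (pow_mx d.+1) <= d)%N.
Proof. by exists n; rewrite rank_leq_col. Qed.

Definition pow_len := ex_minn pow_mx_rank_small.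

(* By minimality [pow_len <= \rank (pow_mx pow_len)], so one more power does not
   raise the rank. *)
Lemma pow_mx_stable : (pow_mx pow_len.+1 <= pow_mx pow_len)%MS.
Proof.
rewrite /pow_len; case: ex_minnP => d Hd Hmin.
have sub : (pow_mx d <= pow_mx d.+1)%MS.
  apply/row_subP => j; apply: (eq_row_sub (widen_ord (leqnSn d) j)).
  by rewrite !rowK.
have rk : (d <= \rank (pow_mx d))%N.
  case: d Hd Hmin sub => [|d] // Hd Hmin _.
  by rewrite ltnNge; apply/negP => /Hmin; rewrite ltnn.
by rewrite -(geq_leqif (mxrank_leqif_sup sub)) (leq_trans Hd rk).
Qed.

Lemma dpow_sub_pow_mx j : (dpow A s j <= pow_mx pow_len)%MS.
Proof.
have row_pow i (lt_i : (i < pow_len.+1)%N) : (dpow A s i <= pow_mx pow_len)%MS.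
  apply: submx_trans pow_mx_stable.
  by apply: (eq_row_sub (Ordinal lt_i)); rewrite rowK.
have stable : (pow_mx pow_len *m (hit_mx A s)^T <= pow_mx pow_len)%MS.
  apply/row_subP => i.
  by rewrite row_mul rowK -dmulE (row_pow i.+1 (ltn_ord i)).
elim: j => [|j IH]; first exact: row_pow.
by rewrite /= dmulE (submx_trans _ stable) ?submxMr.
Qed.

Definition pow_ann := kermx (pow_mx pow_len)^T.

Lemma sub_pow_annP v :
  (v <= pow_ann)%MS <-> forall j, evalv (dpow A s j) v = 0.
Proof.
split=> [/sub_kermxP Hv j | Hv]; last first.
  apply/sub_kermxP/rowP => j; rewrite [RHS]mxE -(Hv j) mxE.
  by apply: eq_bigr => i _; rewrite !mxE.
case/submxP: (dpow_sub_pow_mx j) => w ->.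
by rewrite -evalv_mx trmx_mul mulmxA Hv mul0mx mxE.
Qed.

Lemma pow_ann0_span_pow_full :
  (forall v : 'rV[k]_n, (v <= pow_ann)%MS -> v = 0) ->
  forall f, in_span_pow A s f.
Proof.
move=> ann0 f.
have full : row_full (pow_mx pow_len).
  have /eqP : pow_ann = 0.
    by apply/row_matrixP => i; rewrite row0; apply: ann0; rewrite row_sub.
  by rewrite kermx_eq0 /row_full -mxrank_tr.
case/submxP: (submx_full f full) => w ->.
exists pow_len, (fun j => w 0 j); rewrite mulmx_sum_row.
by apply: eq_bigr => j _; rewrite rowK.
Qed.

Lemma pow_ann_left_ideal : left_ideal A pow_ann.
Proof.
move=> x v /sub_pow_annP Hv; apply/sub_pow_annP => j.
have /grouplike_dualP[evM _] := grouplike_dpow HA j Hs.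
by rewrite evM Hv mulr0.
Qed.

Lemma pow_ann_right_ideal : right_ideal A pow_ann.
Proof.
move=> x v /sub_pow_annP Hv; apply/sub_pow_annP => j.
have /grouplike_dualP[evM _] := grouplike_dpow HA j Hs.
by rewrite evM Hv mul0r.
Qed.

Lemma pow_ann_hit : (pow_ann *m hit_mx A s <= pow_ann)%MS.
Proof.
apply/row_subP => i; rewrite row_mul; apply/sub_pow_annP => j.
by rewrite -evalv_dmul; apply: (iffLR (sub_pow_annP _)) (row_sub i _) j.+1.
Qed.

End PowerAnnihilator.

Section Semisimple.
Variables (k : fieldType) (n : nat) (A : hopf_str k n).
Hypothesis HA : is_hopf A.
Hypothesis Hss : semisimple A.

Lemma semisimple_right_unit L : left_ideal A L -> exists e, right_unit A L e.
Proof.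
move=> HL; have [J [HJ LJ0 LJ1]] := Hss HL.
have /sub_addsmxP[[u1 u2] /= Hone] : (honev A <= L + J)%MS.
  exact: submx_trans (submx1 _) LJ1.
exists (u1 *m L); split=> [|x xL]; first exact: submxMl.
have Hx : x = hmulv A x (u1 *m L) + hmulv A x (u2 *m J).
  by rewrite -hmulvDr -Hone hmulv1.
have xJ : (hmulv A x (u2 *m J) <= J)%MS by apply: HJ; exact: submxMl.
have xL' : (hmulv A x (u2 *m J) <= L)%MS.
  rewrite (_ : hmulv A x _ = x - hmulv A x (u1 *m L)); last first.
    by rewrite {2}Hx addrC addKr.
  by rewrite addmx_sub // (eqmx_opp (hmulv A x _)) HL ?submxMl.
have : (hmulv A x (u2 *m J) <= (0 : 'M_n))%MS.
  by apply: submx_trans LJ0; rewrite sub_capmx xJ xL'.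
by rewrite submx0 => /eqP x0; rewrite {2}Hx x0 addr0.
Qed.

Lemma sub_rmul_mxP (v d : 'rV[k]_n) :
  (v <= rmul_mx A d)%MS <-> exists w, v = hmulv A w d.
Proof.
split=> [/submxP[w ->]|[w ->]]; last by rewrite hmulvEr submxMl.
by exists w; rewrite hmulvEr.
Qed.

Lemma rmul_mx_left_ideal d : left_ideal A (rmul_mx A d).
Proof.
move=> x v /sub_rmul_mxP[w ->]; apply/sub_rmul_mxP.
by exists (hmulv A x w); rewrite hmulvA.
Qed.

(* [d = e' - e] annihilates [I] on the right, so the left ideal [H d] squares to
   zero; by semisimplicity it is zero. *)
Lemma right_unit_unique I e e' : right_ideal A I ->
  right_unit A I e -> right_unit A I e' -> e' = e.
Proof.
move=> HIr [eI He] [e'I He'].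
have dI : (e' - e <= I)%MS by rewrite addmx_sub // (eqmx_opp e).
have [u [/sub_rmul_mxP[w ->] Hu]] :=
  semisimple_right_unit (@rmul_mx_left_ideal (e' - e)).
have d_in : (e' - e <= rmul_mx A (e' - e))%MS.
  by apply/sub_rmul_mxP; exists (honev A); rewrite hmul1v.
apply/eqP; rewrite -subr_eq0; apply/eqP.
by rewrite -(Hu _ d_in) -(hmulvA HA) hmulvBr He' ?He ?subrr // HIr.
Qed.

End Semisimple.

Lemma mxtrace_idem (k : fieldType) m (P : 'M[k]_m) :
  P *m P = P -> \tr P = (\rank P)%:R.
Proof.
move=> PP; have PCR : P = col_base P *m row_base P by rewrite mulmx_base.
have RC : row_base P *m col_base P = 1%:M.
  apply: (row_free_inj (row_base_free P)).
  apply: (row_full_inj (col_base_full P)).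
  by rewrite /= mul1mx mulmxA mulmxA -PCR -mulmxA -PCR.
by rewrite {1}PCR mxtrace_mulC RC mxtrace1.
Qed.

Section IdealRepresentation.
Variables (k : fieldType) (n : nat) (A : hopf_str k n).
Hypothesis HA : is_hopf A.
Variable L : 'M[k]_n.
Hypothesis HL : left_ideal A L.

Local Notation B := (row_base L).

Definition ideal_act x : 'M[k]_(\rank L) := B *m lmul_mx A x *m pinvmx B.

Lemma ideal_actE x : ideal_act x *m B = B *m lmul_mx A x.
Proof.
apply: mulmxKpV; apply/row_subP => p; rewrite row_mul -hmulvEl eq_row_base.
by apply: HL; rewrite -(eq_row_base L) row_sub.
Qed.

Lemma ideal_actM x y : ideal_act (hmulv A x y) = ideal_act y *m ideal_act x.
Proof.
apply: (row_free_inj (row_base_free L)).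
rewrite ideal_actE (lmul_mxM HA) -mulmxA ideal_actE.
by rewrite [RHS]mulmxA ideal_actE mulmxA.
Qed.

Lemma ideal_act1 : ideal_act (honev A) = 1%:M.
Proof.
apply: (row_free_inj (row_base_free L)).
by rewrite ideal_actE (lmul_mx1 HA) mul1mx mulmx1.
Qed.

Lemma ideal_act_expand x :
  ideal_act x = \sum_i x 0 i *: ideal_act (delta_mx 0 i).
Proof.
apply: (row_free_inj (row_base_free L)).
rewrite ideal_actE mulmx_suml {1}lmul_mx_expand mulmx_sumr.
by apply: eq_bigr => i _; rewrite -scalemxAl ideal_actE scalemxAr.
Qed.

Definition ideal_rep (i : 'I_n) : 'M[k]_(\rank L) :=
  (ideal_act (delta_mx 0 i))^T.

Lemma ideal_rep_rep : rep_of A ideal_rep.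
Proof.
split=> [i j|].
  rewrite /ideal_rep -trmx_mul -ideal_actM hmulv_delta ideal_act_expand.
  apply/matrixP => a b; rewrite !mxE !summxE; apply: eq_bigr => l _.
  by rewrite !mxE.
rewrite -[1%:M]trmx1 -ideal_act1 ideal_act_expand.
apply/matrixP => a b; rewrite !mxE !summxE; apply: eq_bigr => l _.
by rewrite !mxE.
Qed.

Lemma ideal_act_stable (U : 'M[k]_(\rank L)) :
  (forall i, (U *m (ideal_rep i)^T <= U)%MS) ->
  forall x, (U *m ideal_act x <= U)%MS.
Proof.
move=> HU x; rewrite ideal_act_expand mulmx_sumr; apply: summx_sub => i _.
by rewrite -scalemxAr scalemx_sub //; have := HU i; rewrite /ideal_rep trmxK.
Qed.

Lemma ideal_rep_irr : minimal_left_ideal A L -> irr_rep A ideal_rep.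
Proof.
case=> _ Lpos Lmin; split=> [||U HU]; [exact: ideal_rep_rep | exact: Lpos |].
have UB_left : left_ideal A <<U *m B>>%MS.
  move=> x v; rewrite !genmxE => /submxP[w ->].
  rewrite hmulvEl -2!mulmxA -ideal_actE 2!mulmxA; apply: submxMr.
  by rewrite -mulmxA mulmx_sub ?ideal_act_stable.
have UB_sub : (<<U *m B>> <= L)%MS by rewrite genmxE -(eq_row_base L) submxMl.
case: (Lmin _ UB_left UB_sub); rewrite genmxE mxrankMfree ?row_base_free //.
  by move/eqP; rewrite mxrank_eq0 => /eqP ->; left.
by move=> rkU; right; rewrite /row_full rkU.
Qed.

Lemma evalv_charv_ideal_rep a : evalv (charv ideal_rep) a = \tr (ideal_act a).
Proof.
rewrite [ideal_act a]ideal_act_expand raddf_sum; apply: eq_bigr => i _.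
by rewrite /= mxtraceZ mxE /ideal_rep mxtrace_tr.
Qed.

(* The right unit [a] acts on [L] as a nonzero idempotent, of nonzero trace. *)
Lemma evalv_charv_right_unit a : [pchar k] =i pred0 -> (0 < \rank L)%N ->
  right_unit A L a -> evalv (charv ideal_rep) a != 0.
Proof.
move=> k0 Lpos [aL Ha].
have a_neq0 : a != 0.
  apply: contraTneq Lpos => a0; rewrite -leqNgt leqn0 mxrank_eq0.
  by apply/eqP/row_matrixP => i; rewrite row0 -(Ha _ (row_sub i L)) a0 hmulv0.
rewrite evalv_charv_ideal_rep mxtrace_idem -?ideal_actM ?Ha //.
move/pcharf0P: k0 => ->; rewrite mxrank_eq0; apply: contra a_neq0 => /eqP a0.
have /submxP[w aw] : (a <= B)%MS by rewrite eq_row_base.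
by rewrite -(Ha a aL) hmulvEl {1}aw -mulmxA -ideal_actE a0 mul0mx mulmx0.
Qed.

End IdealRepresentation.

Lemma exists_minimal_left_ideal (k : fieldType) n (A : hopf_str k n) L0 :
  left_ideal A L0 -> (0 < \rank L0)%N ->
  exists2 L, minimal_left_ideal A L & (L <= L0)%MS.
Proof.
move: {2}(\rank L0) (leqnn (\rank L0)) => N.
elim: N L0 => [|N IH] L0 rkN HL0 L0pos.
  by rewrite leqn0 (gtn_eqF L0pos) in rkN.
have [[U [HU UL0 Upos rkU]] | no_smaller] := classic (exists U : 'M[k]_n,
  [/\ left_ideal A U, (U <= L0)%MS, (0 < \rank U)%N & (\rank U < \rank L0)%N]).
  have [|L minL LU] := IH U _ HU Upos; first by rewrite -ltnS (leq_trans rkU).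
  by exists L; last exact: submx_trans LU UL0.
exists L0 => //; split=> // U HU UL0.
have [-> | Upos] := posnP (\rank U); [by left | right].
apply/eqP; rewrite eqn_leq mxrankS //= leqNgt; apply/negP => rkU.
by apply: no_smaller; exists U.
Qed.

Section OneDimensional.
Variables (k : fieldType) (n : nat) (A : hopf_str k n).

Lemma charv1E (r : 'I_n -> 'M[k]_1) l : charv r 0 l = r l 0 0.
Proof. by rewrite mxE /mxtrace big_ord1. Qed.

Lemma mulmx11 (M N : 'M[k]_1) : (M *m N) 0 0 = M 0 0 * N 0 0.
Proof. by rewrite mxE big_ord1. Qed.

Lemma mx11P (M N : 'M[k]_1) : M 0 0 = N 0 0 -> M = N.
Proof. by move=> MN; apply/matrixP => a b; rewrite !ord1. Qed.

Lemma rep1_grouplike (r : 'I_n -> 'M[k]_1) :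
  rep_of A r <-> grouplike_dual A (charv r).
Proof.
split=> [[rM r1] | [sM s1]].
  split=> [i j|].
    rewrite !charv1E -[RHS]mulmx11 rM summxE.
    by apply: eq_bigr => l _; rewrite charv1E mxE.
  transitivity ((1%:M : 'M[k]_1) 0 0); last by rewrite mxE.
  by rewrite -r1 summxE; apply: eq_bigr => l _; rewrite charv1E mxE.
split=> [i j|].
  apply: mx11P; rewrite mulmx11 summxE -!charv1E -sM.
  by apply: eq_bigr => l _; rewrite charv1E mxE.
apply: mx11P; rewrite summxE mxE -s1.
by apply: eq_bigr => l _; rewrite charv1E mxE.
Qed.

Lemma charv_scalar1 (s : 'rV[k]_n) : charv (fun l => (s 0 l)%:M : 'M[k]_1) = s.
Proof. by apply/rowP => l; rewrite charv1E mxE. Qed.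

Lemma rep1_irr (r : 'I_n -> 'M[k]_1) : rep_of A r -> irr_rep A r.
Proof.
move=> Hr; split=> // U _; have [-> | U_neq0] := eqVneq U 0; first by left.
by right; rewrite /row_full eqn_leq rank_leq_col lt0n mxrank_eq0.
Qed.

Lemma in_LKer1 (r : 'I_n -> 'M[k]_1) h :
  in_LKer A r h <-> h *m hit_mx A (charv r) = h.
Proof.
have LKerE (v : 'cV[k]_1) j a :
    \sum_i h 0 i * (\sum_l hcop A i j l * (r l *m v) a 0)
    = (h *m hit_mx A (charv r)) 0 j * v 0 0.
  rewrite (ord1 a) [X in _ = X * _]mxE big_distrl; apply: eq_bigr => i _ /=.
  rewrite -mulrA mxE big_distrl; congr (_ * _); apply: eq_bigr => l _ /=.
  by rewrite mxE big_ord1 charv1E mulrA.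
split=> [Hh | Hh v j a]; last by rewrite LKerE Hh (ord1 a).
by apply/rowP => j; have := Hh 1%:M j 0; rewrite LKerE !mxE !mulr1.
Qed.

End OneDimensional.

Section Equivalence.
Variables (k : fieldType) (n : nat) (A : hopf_str k n).
Hypothesis HA : is_hopf A.

Lemma evalv_dpow_fixed s h : h *m hit_mx A s = h ->
  forall j, evalv (dpow A s j) h = evalv (deps A) h.
Proof. by move=> hs; elim=> [//|j IH]; rewrite /= evalv_dmul hs. Qed.

Lemma span_pow_sub_RH s f : grouplike_dual A s -> in_span_pow A s f -> inRH A f.
Proof.
move=> Hs [m [c ->]].
exists m, c, (fun _ => 1%N), (fun j l => (dpow A s j 0 l)%:M); split.
  move=> j; apply/rep1_irr/rep1_grouplike.
  by rewrite charv_scalar1; apply: grouplike_dpow.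
by apply: eq_bigr => j _; rewrite charv_scalar1.
Qed.

Lemma span_pow_full_faithful1 s :
  grouplike_dual A s -> (forall f, in_span_pow A s f) ->
  faithful_char A (fun l => (s 0 l)%:M : 'M[k]_1).
Proof.
move=> Hs span h; rewrite in_LKer1 charv_scalar1.
split=> [hs | [c ->]]; last first.
  by rewrite -scalemxAl (honev_hit_mx HA Hs).
exists (evalv (deps A) h); apply/rowP => t.
have [m [c dt]] := span (delta_mx 0 t).
have h_t : h 0 t = \sum_j c j * evalv (deps A) h.
  rewrite -evalv_delta evalvC dt evalv_sumZ.
  by apply: eq_bigr => j _; rewrite evalv_dpow_fixed.
have one_t : honev A 0 t = \sum_j c j.
  rewrite -evalv_delta evalvC dt evalv_sumZ.
  apply: eq_bigr => j _; have /grouplike_dualP[_ ->] := grouplike_dpow HA j Hs.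
  by rewrite mulr1.
by rewrite mxE h_t one_t -big_distrl mulrC.
Qed.

Hypothesis Hss : semisimple A.

Lemma faithful1_span_pow_full (r : 'I_n -> 'M[k]_1) :
  rep_of A r -> faithful_char A r ->
  forall f, in_span_pow A (charv r) f.
Proof.
move=> /rep1_grouplike Hs faithful; set s := charv r.
have HI := pow_ann_left_ideal HA Hs; have HIr := pow_ann_right_ideal HA Hs.
have [e [eI He]] := semisimple_right_unit HA Hss HI.
have IR : (pow_ann A s <= pow_ann A s *m hit_mx A s)%MS.
  rewrite -(geq_leqif (mxrank_leqif_sup (pow_ann_hit A s))) mxrankMfree //.
  by rewrite row_free_unit (hit_mx_unit HA Hs).
have eR_unit : right_unit A (pow_ann A s) (e *m hit_mx A s).
  split=> [|x xI]; first exact: submx_trans (submxMr _ eI) (pow_ann_hit A s).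
  have /submxP[w ->] := submx_trans xI IR.
  by rewrite mulmxA (hit_mx_hmulv HA Hs) He ?submxMl.
have eR := right_unit_unique HA Hss HIr (conj eI He) eR_unit.
have /faithful[c ec] : in_LKer A r e by apply/in_LKer1.
have c0 : c = 0.
  have := iffLR (sub_pow_annP A s e) eI 0%N.
  by rewrite ec evalvZ /dpow /= (evalv_deps1 HA) mulr1.
apply: pow_ann0_span_pow_full => v vI.
by rewrite -(He v vI) ec c0 scale0r hmulv0.
Qed.

Hypothesis k0 : [pchar k] =i pred0.

Lemma RH_sub_span_pow_full s : grouplike_dual A s ->
  (forall f, inRH A f -> in_span_pow A s f) -> forall f, in_span_pow A s f.
Proof.
move=> Hs RH_span; apply: pow_ann0_span_pow_full => v vI.
apply/eqP; apply: contraT => v_neq0.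
have [L /[dup] minL [HL Lpos _] LI] :
    exists2 L, minimal_left_ideal A L & (L <= pow_ann A s)%MS.
  apply: exists_minimal_left_ideal; first exact: pow_ann_left_ideal.
  by rewrite (leq_trans _ (mxrankS vI)) // lt0n mxrank_eq0.
have [a [aL Ha]] := semisimple_right_unit HA Hss HL.
have chi_a := evalv_charv_right_unit HA HL k0 Lpos (conj aL Ha).
have [|m [c chi_span]] := RH_span (charv (ideal_rep A L)).
  exists 1%N, (fun _ => 1), (fun _ => \rank L), (fun _ => ideal_rep A L).
  by rewrite big_ord1 scale1r; split=> // _; apply: ideal_rep_irr.
rewrite chi_span evalv_sumZ big1 ?eqxx // in chi_a => j _.
by rewrite (iffLR (sub_pow_annP A s a) (submx_trans aL LI) j) mulr0.
Qed.

End Equivalence.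

Unset Implicit Arguments.
Set Strict Implicit.

Theorem corollary3p9 (k : closedFieldType) (n : nat) (A : hopf_str k n) :
  [pchar k] =i pred0 -> is_hopf A -> semisimple A ->
  [<-> (exists r : 'I_n -> 'M[k]_1, rep_of A r /\ faithful_char A r);
       (exists s : 'rV[k]_n, grouplike_dual A s /\
          forall f : 'rV[k]_n, inRH A f <-> in_span_pow A s f);
       (exists s : 'rV[k]_n, grouplike_dual A s /\
          forall f : 'rV[k]_n, in_span_pow A s f)].
Proof.
move=> k0 HA Hss; tfae.
- move=> [r [Hr faithful]]; exists (charv r); have /rep1_grouplike Hs := Hr.
  split=> // f; split=> [_ | /(span_pow_sub_RH HA Hs)//].
  exact: faithful1_span_pow_full.
- move=> [s [Hs RH_span]]; exists s; split=> //.
  by apply: RH_sub_span_pow_full => // f /RH_span.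
- move=> [s [Hs span]]; exists (fun l => (s 0 l)%:M); split.
    by apply/rep1_grouplike; rewrite charv_scalar1.
  exact: span_pow_full_faithful1.
Qed.
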